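(* For any positive integers $q$ and $k$ there exists a constant $f(q,k)$ such that the following holds. Let $D=(V,A)$ be a Steiner rooted $k$-arc-connected directed graph with root $r$ and a single terminal $s$, and let $\mathcal{C}$ be a family of pairwise vertex-disjoint $s$-essential directed cycles in $D$ with $|\mathcal{C}|\ge f(q,k)$. Then there exist $C_1,\ldots,C_q\in\mathcal{C}$ such that $(C_1,\ldots,C_q)$ is an $s$-ordered sequence of directed cycles.
   Context: Let $D=(V,A)$ be a directed graph with root $r\in V$ and terminal set $S\subseteq V\setminus\{r\}$; it is Steiner rooted $k$-arc-connected if for every $s\in S$ there are $k$ pairwise arc-disjoint directed $r$-$s$ paths. For $s\in S$, a set $U\subseteq V$ is an $s$-cut if $r\in U$ and $s\notin U$; it is a tight $s$-cut if moreover the number of arcs leaving $U$ equals $k$. A set $U$ properly intersects a directed cycle $C$ if $V(C)\cap U\neq\emptyset$ and $V(C)\setminus U\neq\emptyset$. A directed cycle $C$ is $s$-essential if some tight $s$-cut properly intersects $C$. A sequence of directed cycles $(C_1,\ldots,C_q)$ is $s$-ordered if there exist tight $s$-cuts $U_1,\ldots,U_q$ such that $V(C_i)\subseteq U_j$ for all $i<j$, $V(C_i)\cap U_j=\emptyset$ for all $i>j$, and $U_i$ properly intersects $C_i$ for every $i$. *)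

(* A directed (multi)graph D = (V, A) is given by finite types
   V (vertices) and A (arcs) together with tail and head maps tl hd : A -> V. *)
From mathcomp Require Import all_boot.
Set Implicit Arguments. Unset Strict Implicit. Unset Printing Implicit Defensive.

Section Digraph.
Variables (V A : finType) (tl hd : A -> V).

Fixpoint is_walk (x : V) (p : seq A) (y : V) : bool :=
  match p with
  | [::] => x == y
  | a :: p' => (tl a == x) && is_walk (hd a) p' y
  end.

Definition dipath (x y : V) (p : seq A) : bool :=
  is_walk x p y && uniq (x :: map hd p).

Definition steiner_rooted_kac (r : V) (S : {set V}) (k : nat) : Prop :=
  r \notin S /\
  forall s, s \in S ->
    exists P : 'I_k -> seq A,
      (forall i, dipath r s (P i)) /\
      (forall i j, i != j -> forall a, a \in P i -> a \notin P j).

Definition delta_out (U : {set V}) : {set A} :=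
  [set a | (tl a \in U) && (hd a \notin U)].

Definition s_cut (r s : V) (U : {set V}) : bool := (r \in U) && (s \notin U).

Definition tight_s_cut (k : nat) (r s : V) (U : {set V}) : bool :=
  s_cut r s U && (#|delta_out U| == k).

Definition dicycle (C : seq A) : bool :=
  match C with
  | [::] => false
  | a :: _ => is_walk (tl a) C (tl a) && uniq (map tl C)
  end.

Definition cyc_verts (C : seq A) : {set V} := [set x | x \in map tl C].

Definition properly_intersects (U : {set V}) (C : seq A) : bool :=
  (U :&: cyc_verts C != set0) && (cyc_verts C :\: U != set0).

Definition s_essential (k : nat) (r s : V) (C : seq A) : Prop :=
  dicycle C /\ exists U : {set V}, tight_s_cut k r s U && properly_intersects U C.

Definition s_ordered (k : nat) (r s : V) (q : nat) (Cs : 'I_q -> seq A) : Prop :=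
  (forall i, dicycle (Cs i)) /\
  exists Us : 'I_q -> {set V},
    (forall j, tight_s_cut k r s (Us j)) /\
    (forall i j : 'I_q, i < j -> cyc_verts (Cs i) \subset Us j) /\
    (forall i j : 'I_q, j < i -> cyc_verts (Cs i) :&: Us j = set0) /\
    (forall i, properly_intersects (Us i) (Cs i)).

End Digraph.

From mathcomp Require Import all_boot zify.
Set Implicit Arguments. Unset Strict Implicit. Unset Printing Implicit Defensive.

(* By submodularity of the out-degree, tight s-cuts are closed under union and
   intersection. Disjoint cycles crossed by one cut W each use their own arc
   leaving W, so at most k of them are crossed by a tight cut. Hence among more
   than k disjoint essential cycles one lies inside a tight cut (the maximum tight
   cut cannot cross them all). Let X be a minimal tight cut containing some cycle
   C_1, and Y a maximal tight cut strictly inside X: then Y crosses every cycle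
   contained in X, so at most 2k cycles meet X. The cycles disjoint from X yield
   by induction an ordered sequence (C_i, U_i), and (C_1, Y) followed by the
   (C_i, U_i :|: X) is ordered again; thus f(q, k) = q (2k + 1) works. *)

Lemma size_pairwise_disjoint_meeting (T : eqType) (X : finType) (D : {set X})
    (P : T -> {set X}) (s : seq T) :
  pairwise [rel x y | [disjoint P x & P y]] s ->
  all (fun x => P x :&: D != set0) s -> size s <= #|D|.
Proof.
elim: s D => //= x s IH D /andP [dx ds] /andP [mx ms].
apply: (@leq_ltn_trans #|D :\: P x|).
  apply: IH => //; apply/allP => y ys.
  have dyx : [disjoint P y & P x] by rewrite disjoint_sym; exact: (allP dx).
  by rewrite setIDA -setIDAC (setDidPl dyx) (allP ms).
have := subset_leq_card (subsetIl D (P x)).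
have : 0 < #|D :&: P x| by rewrite card_gt0 setIC.
rewrite cardsD; lia.
Qed.

Section Walks.
Variables (V A : finType) (tl hd : A -> V).

Local Notation walk := (is_walk tl hd).
Local Notation dout := (delta_out tl hd).
Local Notation cv := (cyc_verts tl).

Lemma walk_split x p1 b p2 y :
  walk x (p1 ++ b :: p2) y -> walk x p1 (tl b) /\ walk (tl b) (b :: p2) y.
Proof.
elim: p1 x => [|a p1 IH] x /=; first by case/andP=> /eqP <- w; rewrite /= eqxx.
by case/andP=> -> /IH [].
Qed.

Lemma walk_exit (U : {set V}) x p y :
  walk x p y -> x \in U -> y \notin U -> exists2 a, a \in p & a \in dout U.
Proof.
elim: p x => [|a p IH] x /=; first by move=> /eqP -> ->.
case/andP=> /eqP tla w xU yU; case hU: (hd a \in U).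
  by have [b bp bU] := IH _ w hU yU; exists b; rewrite // inE bp orbT.
by exists a; rewrite ?mem_head // inE tla xU hU.
Qed.

Lemma closed_walk_exit (U : {set V}) x p b c :
  walk x p x -> b \in p -> c \in p -> tl b \in U -> tl c \notin U ->
  exists2 a, a \in p & a \in dout U.
Proof.
move=> w bp cp bU cU; case xU: (x \in U).
  case/splitPr: cp w => p1 p2 /walk_split [w _].
  by have [a ap aU] := walk_exit w xU cU; exists a; rewrite // mem_cat ap.
case/splitPr: bp w => p1 p2 /walk_split [_ w].
by have [a ap aU] := walk_exit w bU (negbT xU); exists a; rewrite // mem_cat ap orbT.
Qed.

Lemma dicycle_exit (U : {set V}) C :
  dicycle tl hd C -> properly_intersects tl U C -> exists2 a, a \in C & a \in dout U.
Proof.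
case: C => [|a0 C] // /andP [w _] /andP [/set0Pn [x xUC] /set0Pn [y yCU]].
move: xUC yCU; rewrite in_setI in_setD !in_set.
move=> /andP [xU /mapP [b bC xb]] /andP [yU /mapP [c cC yc]].
by apply: closed_walk_exit w bC cC _ _; rewrite -?xb -?yc.
Qed.

Lemma card_delta_outUI (X Y : {set V}) :
  #|dout (X :|: Y)| + #|dout (X :&: Y)| <= #|dout X| + #|dout Y|.
Proof.
rewrite -cardsUI -[#|dout X| + _]cardsUI.
apply: leq_add; apply: subset_leq_card; apply/subsetP => a; rewrite !inE;
by case: (tl a \in X); case: (tl a \in Y); case: (hd a \in X); case: (hd a \in Y).
Qed.

Lemma size_crossing_cycles (W : {set V}) (F : seq (seq A)) :
  pairwise [rel C C' | [disjoint cv C & cv C']] F ->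
  {in F, forall C, dicycle tl hd C && properly_intersects tl W C} ->
  size F <= #|dout W|.
Proof.
move=> dF crossF.
apply: (@size_pairwise_disjoint_meeting _ _ _ (fun C : seq A => [set a in C])).
  apply: sub_pairwise dF => C C' /= /pred0P dCC'; apply/pred0P => a /=.
  rewrite !inE; apply/negP => /andP [aC aC'].
  by have := dCC' (tl a); rewrite /= !inE !map_f.
apply/allP => C CF; have /andP [cC pC] := crossF C CF.
by have [a aC aW] := dicycle_exit cC pC; apply/set0Pn; exists a; rewrite in_setI in_set aC.
Qed.
End Walks.

Section TightCuts.
Variables (V A : finType) (tl hd : A -> V) (r s : V) (k : nat).
Hypothesis kac : steiner_rooted_kac tl hd r [set s] k.

Local Notation dout := (delta_out tl hd).
Local Notation tight := (tight_s_cut tl hd k r s).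

Lemma card_delta_out_cut U : s_cut r s U -> k <= #|dout U|.
Proof.
move=> /andP [rU sU]; have [_ /(_ s (set11 s)) [P [Pp Pd]]] := kac.
rewrite -[k]size_enum_ord.
apply: (@size_pairwise_disjoint_meeting _ _ _ (fun i => [set a in P i])).
  apply: (@sub_pairwise _ [rel i j | i != j]); last by rewrite -uniq_pairwise enum_uniq.
  move=> i j /= ij; apply/pred0P => a /=; rewrite !inE.
  by apply/negP => /andP [aPi]; apply/negP; apply: Pd aPi.
apply/allP => i _; have /andP [w _] := Pp i.
by have [a aP aU] := walk_exit w rU sU; apply/set0Pn; exists a; rewrite in_setI in_set aP.
Qed.

Lemma tight_setUI X Y : tight X -> tight Y -> tight (X :|: Y) && tight (X :&: Y).
Proof.
case/andP=> /andP [rX sX] /eqP cX /andP [/andP [rY sY] /eqP cY].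
have cutU : s_cut r s (X :|: Y) by rewrite /s_cut !inE rX negb_or sX sY.
have cutI : s_cut r s (X :&: Y) by rewrite /s_cut !inE rX rY negb_and sX.
have := card_delta_outUI tl hd X Y.
have := card_delta_out_cut cutU; have := card_delta_out_cut cutI.
rewrite /tight_s_cut cutU cutI cX cY /=; lia.
Qed.

Lemma tight_setU X Y : tight X -> tight Y -> tight (X :|: Y).
Proof. by move=> tX tY; case/andP: (tight_setUI tX tY). Qed.

Lemma tight_setI X Y : tight X -> tight Y -> tight (X :&: Y).
Proof. by move=> tX tY; case/andP: (tight_setUI tX tY). Qed.

End TightCuts.

Section OrderedCycles.
Variables (V A : finType) (tl hd : A -> V) (r s : V) (k : nat).
Hypothesis kac : steiner_rooted_kac tl hd r [set s] k.

Local Notation dout := (delta_out tl hd).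
Local Notation tight := (tight_s_cut tl hd k r s).
Local Notation cv := (cyc_verts tl).
Local Notation ess := (s_essential tl hd k r s).
Local Notation disjoint_cycles := (pairwise [rel C C' | [disjoint cv C & cv C']]).

Lemma card_delta_out_tight U : tight U -> #|dout U| = k.
Proof. by case/andP=> _ /eqP. Qed.

Lemma exists_cycle_in_tight F :
  disjoint_cycles F -> {in F, forall C, ess C} -> k < size F ->
  exists2 U, tight U & has (fun C => cv C \subset U) F.
Proof.
move=> dF eF ltkF.
have [_ [U0 /andP [tU0 _]]] := eF _ (mem_nth [::] (leq_ltn_trans (leq0n k) ltkF)).
case: (@arg_maxnP _ U0 tight (fun U => #|U|) tU0) => M tM maxM.
have subM U : tight U -> U \subset M.
  move=> tU; apply/negPn/negP => nUM; have := maxM _ (tight_setU kac tM tU).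
  by rewrite /= leqNgt proper_card // properUl.
exists M => //; apply/idPn => /hasPn noCM.
suff : size F <= k by rewrite leqNgt ltkF.
rewrite -(card_delta_out_tight tM); apply: size_crossing_cycles dF _ => C CF.
have [cC [U /andP [tU /andP [UC _]]]] := eF C CF.
rewrite cC /properly_intersects setD_eq0 noCM // andbT -card_gt0.
by rewrite -card_gt0 in UC; apply: leq_trans UC (subset_leq_card (setSI _ (subM U tU))).
Qed.

Lemma crossed_by_maximal_tight X Y C :
  tight X -> tight Y -> Y \proper X ->
  (forall Z, tight Z -> Y \subset Z -> Z \proper X -> Z = Y) ->
  (forall Z, tight Z -> Z \proper X -> ~~ (cv C \subset Z)) ->
  ess C -> cv C \subset X -> properly_intersects tl Y C.
Proof.
move=> tX tY YX maxY minX [_ [U /andP [tU /andP [UC CU]]]] CX.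
rewrite /properly_intersects setD_eq0 (minX Y tY YX) andbT.
apply/negP => /eqP YC0.
have [x /setIP [xU xC]] := set0Pn _ UC.
set Z := Y :|: (U :&: X).
have tZ : tight Z := tight_setU kac tY (tight_setI kac tU tX).
have ZX : Z \subset X by rewrite subUset (proper_sub YX) subsetIr.
have [ZeX | ZneX] := eqVneq Z X.
  move/negP: CU; apply; rewrite setD_eq0; apply/subsetP => z zC.
  have : z \in Z by rewrite ZeX (subsetP CX).
  rewrite in_setU in_setI => /orP [zY | /andP [] //].
  have : z \in Y :&: cv C by rewrite in_setI zY.
  by rewrite YC0 in_set0.
have ZeY : Z = Y by apply: maxY => //; [exact: subsetUl | rewrite properEneq ZneX].
have : x \in Y :&: cv C.
  by rewrite in_setI xC -ZeY in_setU in_setI xU (subsetP CX) ?orbT.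
by rewrite YC0 in_set0.
Qed.

Lemma exists_splitting_pair F :
  {in F, forall C, ess C} -> (exists2 U, tight U & has (fun C => cv C \subset U) F) ->
  exists X Y, [/\ tight X, tight Y, Y \subset X, has (fun C => cv C \subset X) F &
    {in F, forall C, cv C \subset X -> properly_intersects tl Y C}].
Proof.
move=> eF [U0 tU0 hU0].
pose holds U := tight U && has (fun C => cv C \subset U) F.
have holdsU0 : holds U0 by rewrite /holds tU0.
case: (@arg_minnP _ U0 holds (fun U => #|U|) holdsU0) => X.
case/andP=> tX /hasP [C1 C1F C1X] minX.
have [_ [U1 /andP [tU1 /andP [_ C1U1]]]] := eF C1 C1F.
pose below U := tight U && (U \proper X).
have belowU1X : below (U1 :&: X).
  rewrite /below (tight_setI kac tU1 tX) properEneq subsetIr andbT.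
  apply: contraNneq C1U1 => U1XeX; rewrite setD_eq0 (subset_trans C1X) //.
  by rewrite -U1XeX subsetIl.
case: (@arg_maxnP _ _ below (fun U => #|U|) belowU1X) => Y /andP [tY YX] maxY.
exists X, Y; split => //; first exact: proper_sub YX.
  by apply/hasP; exists C1.
move=> C CF CX; apply: crossed_by_maximal_tight tX tY YX _ _ (eF C CF) CX.
  move=> Z tZ YZ ZX; apply/eqP; rewrite eq_sym eqEcard YZ.
  by apply: maxY; rewrite /below tZ ZX.
move=> Z tZ ZX; apply/negP => CZ.
have : #|X| <= #|Z| by apply: minX; rewrite /holds tZ; apply/hasP; exists C.
by rewrite leqNgt proper_card.
Qed.

Lemma count_meeting_le F X Y :
  disjoint_cycles F -> {in F, forall C, dicycle tl hd C} -> tight X -> tight Y ->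
  {in F, forall C, cv C \subset X -> properly_intersects tl Y C} ->
  count (fun C => ~~ [disjoint cv C & X]) F <= k + k.
Proof.
move=> dF cF tX tY crossY.
pose inX C := cv C \subset X.
pose acrossX C := properly_intersects tl X C.
have inX_le : count inX F <= k.
  rewrite -size_filter -(card_delta_out_tight tY).
  apply: size_crossing_cycles (pairwise_filter _ dF) _ => C.
  by rewrite mem_filter => /andP [CX CF]; rewrite cF // crossY.
have acrossX_le : count acrossX F <= k.
  rewrite -size_filter -(card_delta_out_tight tX).
  apply: size_crossing_cycles (pairwise_filter _ dF) _ => C.
  by rewrite mem_filter => /andP [acrossC CF]; rewrite cF.
apply: leq_trans (leq_add inX_le acrossX_le).
rewrite -count_predUI; apply: leq_trans (leq_addr _ _).
apply: sub_count => C /=.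
rewrite -setI_eq0 /inX /acrossX /properly_intersects setD_eq0 setIC.
by case: (cv C \subset X) => // ->.
Qed.

Definition ordered_chain (F : seq (seq A)) q
    (Cs : nat -> seq A) (Us : nat -> {set V}) : Prop :=
  [/\ forall i, i < q -> (Cs i \in F) && tight (Us i),
      forall i j, i < j < q -> cv (Cs i) \subset Us j,
      forall i j, j < i < q -> cv (Cs i) :&: Us j = set0 &
      forall i, i < q -> properly_intersects tl (Us i) (Cs i)].

Lemma ordered_chain_cons F X Y C1 q Cs Us :
  tight X -> tight Y -> Y \subset X ->
  C1 \in F -> cv C1 \subset X -> properly_intersects tl Y C1 ->
  ordered_chain [seq C <- F | [disjoint cv C & X]] q Cs Us ->
  ordered_chain F q.+1 (fun i => if i is i'.+1 then Cs i' else C1)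
                       (fun i => if i is i'.+1 then Us i' :|: X else Y).
Proof.
move=> tX tY YX C1F C1X crossC1 [CUs CsUs CsUs0 crossUs].
have outCs i : i < q -> [disjoint cv (Cs i) & X].
  by move=> /CUs /andP []; rewrite mem_filter => /andP [].
split.
- case=> [|i] /= lt; first by rewrite C1F tY.
  have /andP [CF tU] := CUs i lt; rewrite (tight_setU kac tU tX) andbT.
  by move: CF; rewrite mem_filter => /andP [_ ->].
- case=> [|i] [|j] //=; [move=> _ | move=> /andP [lij ljq]].
  + by rewrite (subset_trans C1X) // subsetUr.
  + by rewrite (subset_trans (CsUs i j _)) ?subsetUl // -ltnS lij -ltnS ljq.
- case=> [|i] [|j] //=; [move=> liq | move=> /andP [lji liq]].
  + by apply/eqP; rewrite setI_eq0; exact: (disjointWr YX (outCs i liq)).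
  + rewrite setIUr (CsUs0 i j _) ?set0U; last by rewrite -ltnS lji -ltnS liq.
    by apply/eqP; rewrite setI_eq0 outCs.
- case=> [|i] /= lt //.
  have eX : X :&: cv (Cs i) = set0.
    by apply/eqP; rewrite setI_eq0 disjoint_sym outCs.
  rewrite /properly_intersects setIUl eX setU0 setDUr (setDidPl (outCs i lt)).
  by rewrite (setIidPl (subsetDl _ _)); exact: crossUs.
Qed.

Lemma exists_ordered_chain q F :
  disjoint_cycles F -> {in F, forall C, ess C} -> q * (2 * k + 1) <= size F ->
  exists Cs Us, ordered_chain F q Cs Us.
Proof.
elim: q F => [|q IH] F dF eF szF.
  by exists (fun=> [::]), (fun=> set0); split=> // i j /andP [].
have ltkF : k < size F by nia.
have [X [Y [tX tY YX /hasP [C1 C1F C1X] crossY]]] :=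
  exists_splitting_pair eF (exists_cycle_in_tight dF eF ltkF).
pose outX C := [disjoint cv C & X].
have meetX_le : count (predC outX) F <= k + k :=
  count_meeting_le dF (fun C CF => (eF C CF).1) tX tY crossY.
have outF : {in filter outX F, forall C, ess C}.
  by move=> C; rewrite mem_filter => /andP [_]; apply: eF.
have [|Cs [Us chain]] := IH _ (pairwise_filter _ dF) outF.
  by rewrite size_filter; have := count_predC outX F; nia.
by exists (fun i => if i is i'.+1 then Cs i' else C1),
          (fun i => if i is i'.+1 then Us i' :|: X else Y);
   apply: ordered_chain_cons => //; exact: crossY.
Qed.

End OrderedCycles.

Theorem proposition2p3 :
  forall q k : nat, 0 < q -> 0 < k ->
  exists f : nat,
  forall (V A : finType) (tl hd : A -> V) (r s : V),
    steiner_rooted_kac tl hd r [set s] k ->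
    forall F : seq (seq A),
      (forall C, C \in F -> s_essential tl hd k r s C) ->
      (forall i j, i < j < size F ->
         [disjoint cyc_verts tl (nth [::] F i) & cyc_verts tl (nth [::] F j)]) ->
      f <= size F ->
      exists Cs : 'I_q -> seq A,
        (forall i, Cs i \in F) /\ s_ordered tl hd k r s Cs.
Proof.
move=> q k _ _; exists (q * (2 * k + 1)) => V A tl hd r s kac F eF dF szF.
have dF' : pairwise [rel C C' | [disjoint cyc_verts tl C & cyc_verts tl C']] F.
  by apply/(pairwiseP [::]) => i j _ jF ij; apply: dF; rewrite ij; exact: jF.
have [Cs [Us [CUs CsUs CsUs0 crossUs]]] := exists_ordered_chain kac dF' eF szF.
exists (fun i : 'I_q => Cs i); split=> [i|]; first by case/andP: (CUs i (ltn_ord i)).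
split=> [i|]; first by case/andP: (CUs i (ltn_ord i)) => /eF [].
exists (fun i : 'I_q => Us i); split=> [i|]; first by case/andP: (CUs i (ltn_ord i)).
split=> [i j lij|]; first by apply: CsUs; rewrite lij ltn_ord.
split=> [i j lji|i]; first by apply: CsUs0; rewrite lji ltn_ord.
exact: crossUs.
Qed.
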